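(* Let $L_0\supseteq\mathbf T$ be a normal modal logic that is complete with respect to a class $C$ of Kripke or general frames such that $2\mathcal W$ is an $L_0$-frame for every $\mathcal W\in C$. Let $\varphi\notin L_0$ and let $q$ be a variable not occurring in $\varphi$. Let $$X=\{\Box(q^e\to\psi)\to\psi:\ e\in\{0,1\},\ \Box\psi\in\mathrm{Sub}(\varphi)\},$$ where $q^1=q$ and $q^0=\neg q$. Then $X\nvdash_{L_0}\varphi$. Consequently, for every $n$, the formula $\Box^n\bigwedge X\to\varphi$ does not belong to $L_0$.
   Context: A normal modal logic (nml) contains all tautologies and $\Box(p\to q)\to(\Box p\to\Box q)$, and is closed under modus ponens, necessitation and substitution. $\mathbf T=\mathbf K\oplus(\Box p\to p)$. $\mathrm{Sub}(\varphi)$ is the set of subformulas of $\varphi$, and $\Box^n$ denotes $n$ nested boxes. $Y\vdash_L\theta$ (global consequence) means that $\theta$ has a finite derivation from elements of $Y$ and theorems of $L$ using modus ponens and necessitation. A general frame is a triple $\langle W,R,A\rangle$ with $A\subseteq\mathcal P(W)$ closed under Boolean operations and under $\Box X=\{w:\forall v\,(wRv\Rightarrow v\in X)\}$. A Kripke frame $\langle W,R\rangle$ is identified with $\langle W,R,\mathcal P(W)\rangle$. Models based on a general frame assign admissible sets to variables. Validity means truth everywhere in all such models. An $L$-frame validates all of $L$, and completeness with respect to $C$ means that every non-theorem is invalid in some frame of $C$. The frame $2\mathcal W=\langle W\times\{0,1\},2R,2A\rangle$ is given by $\langle w,a\rangle\,2R\,\langle v,b\rangle$ iff $wRv$, and $2A=\{(X\times\{0\})\cup(Y\times\{1\}):X,Y\in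 A\}$. For Kripke frames, $2A$ is the full powerset. *)

From Stdlib Require Import List.
Import ListNotations.

Inductive form : Type :=
| Var : nat -> form
| Bot : form
| Imp : form -> form -> form
| Box : form -> form.

Definition Neg (a : form) : form := Imp a Bot.
Definition Top : form := Neg Bot.
Definition And (a b : form) : form := Neg (Imp a (Neg b)).

Fixpoint bigAnd (l : list form) : form :=
  match l with
  | [] => Top
  | [a] => a
  | a :: l' => And a (bigAnd l')
  end.

Fixpoint boxn (n : nat) (a : form) : form :=
  match n with
  | 0 => a
  | S n' => Box (boxn n' a)
  end.

Fixpoint subst (s : nat -> form) (a : form) : form :=
  match a with
  | Var n => s n
  | Bot => Bot
  | Imp a b => Imp (subst s a) (subst s b)
  | Box a => Box (subst s a)
  end.

Fixpoint occurs (n : nat) (a : form) : Prop :=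
  match a with
  | Var m => m = n
  | Bot => False
  | Imp a b => occurs n a \/ occurs n b
  | Box a => occurs n a
  end.

Fixpoint sub (a : form) : list form :=
  match a with
  | Var n => [Var n]
  | Bot => [Bot]
  | Imp b c => Imp b c :: (sub b ++ sub c)
  | Box b => Box b :: sub b
  end.

(** Propositional tautologies: true under every boolean valuation treating
    variables and boxed formulas as atoms. *)
Fixpoint beval (v : form -> bool) (a : form) : bool :=
  match a with
  | Var n => v (Var n)
  | Bot => false
  | Imp b c => implb (beval v b) (beval v c)
  | Box b => v (Box b)
  end.

Definition tautology (a : form) : Prop := forall v : form -> bool, beval v a = true.

Definition Kax : form :=
  Imp (Box (Imp (Var 0) (Var 1))) (Imp (Box (Var 0)) (Box (Var 1))).

Definition normal (L : form -> Prop) : Prop :=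
  (forall a, tautology a -> L a) /\
  L Kax /\
  (forall a b, L (Imp a b) -> L a -> L b) /\
  (forall a, L a -> L (Box a)) /\
  (forall s a, L a -> L (subst s a)).

Inductive Kplus (A : form -> Prop) : form -> Prop :=
| Kp_taut : forall a, tautology a -> Kplus A a
| Kp_K : Kplus A Kax
| Kp_ax : forall a, A a -> Kplus A a
| Kp_mp : forall a b, Kplus A (Imp a b) -> Kplus A a -> Kplus A b
| Kp_nec : forall a, Kplus A a -> Kplus A (Box a)
| Kp_subst : forall s a, Kplus A a -> Kplus A (subst s a).

Definition Tlogic : form -> Prop :=
  Kplus (fun a => a = Imp (Box (Var 0)) (Var 0)).

Inductive gderiv (L : form -> Prop) (Y : form -> Prop) : form -> Prop :=
| gd_hyp : forall a, Y a -> gderiv L Y a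
| gd_thm : forall a, L a -> gderiv L Y a
| gd_mp : forall a b, gderiv L Y (Imp a b) -> gderiv L Y a -> gderiv L Y b
| gd_nec : forall a, gderiv L Y a -> gderiv L Y (Box a).

Record gframe : Type := GFrame {
  gW : Type;
  gR : gW -> gW -> Prop;
  gA : (gW -> Prop) -> Prop
}.

Definition boxset (F : gframe) (X : gW F -> Prop) : gW F -> Prop :=
  fun w => forall v, gR F w v -> X v.

Definition is_gframe (F : gframe) : Prop :=
  gA F (fun _ => False) /\
  (forall X, gA F X -> gA F (fun w => ~ X w)) /\
  (forall X Y, gA F X -> gA F Y -> gA F (fun w => X w /\ Y w)) /\
  (forall X, gA F X -> gA F (boxset F X)).

(** Kripke frame <W,R> identified with <W,R,P(W)>. *)
Definition kripke (W : Type) (R : W -> W -> Prop) : gframe :=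
  GFrame W R (fun _ => True).

Fixpoint sat (F : gframe) (V : nat -> gW F -> Prop) (w : gW F) (a : form) : Prop :=
  match a with
  | Var n => V n w
  | Bot => False
  | Imp b c => sat F V w b -> sat F V w c
  | Box b => forall v, gR F w v -> sat F V v b
  end.

Definition admissible_val (F : gframe) (V : nat -> gW F -> Prop) : Prop :=
  forall n, gA F (V n).

Definition valid (F : gframe) (a : form) : Prop :=
  forall V, admissible_val F V -> forall w, sat F V w a.

Definition Lframe (L : form -> Prop) (F : gframe) : Prop :=
  forall a, L a -> valid F a.

Definition complete_wrt (L : form -> Prop) (C : gframe -> Prop) : Prop :=
  forall a, ~ L a -> exists F, C F /\ ~ valid F a.

Definition two (F : gframe) : gframe :=
  GFrame (gW F * bool)
    (fun x y => gR F (fst x) (fst y))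
    (fun Z => exists X Y, gA F X /\ gA F Y /\
       forall w b, Z (w, b) <-> (if b then Y w else X w)).

Definition qpow (q : nat) (e : bool) : form := if e then Var q else Neg (Var q).

Definition Xlist (q : nat) (phi : form) : list form :=
  flat_map (fun s => match s with
                     | Box psi => [Imp (Box (Imp (qpow q true) psi)) psi;
                                   Imp (Box (Imp (qpow q false) psi)) psi]
                     | _ => []
                     end) (sub phi).

From Stdlib Require Import List.

(* Suppose X |-_{L0} phi.  By completeness, phi fails in some
   frame F of C under an admissible valuation V.  On the doubled frame 2F
   (an L0-frame) interpret q as "second copy" and every other variable as V
   on the first coordinate.  Since q does not occur in phi, q-free formulas
   have the same truth value at (w,b) as at w in F.  Every member
   Box(q^e -> psi) -> psi of X is true everywhere in this model: the
   successors (v,b') and (v,e) of a point always come together, and (v,e)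
   satisfies q^e; hence Box psi holds and psi follows by reflexivity (T is
   part of L0).  Global consequence is sound for models on L0-frames in which
   the hypotheses hold everywhere, so phi would hold in 2F, hence in F: a
   contradiction.  The local statement follows because
   L0 |- Box^n /\X -> phi would give X |-_{L0} phi by necessitation. *)

Lemma sub_occurs (q : nat) :
  forall phi s, In s (sub phi) -> occurs q s -> occurs q phi.
Proof.
  induction phi; simpl; intros s Hs Ho.
  - destruct Hs as [<- | []]; exact Ho.
  - destruct Hs as [<- | []]; exact Ho.
  - destruct Hs as [<- | Hs]; [exact Ho |].
    apply in_app_or in Hs; destruct Hs as [Hs | Hs]; eauto.
  - destruct Hs as [<- | Hs]; [exact Ho | eauto].
Qed.

Lemma Xlist_inv (q : nat) (phi a : form) :
  In a (Xlist q phi) ->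
  exists psi e, In (Box psi) (sub phi) /\ a = Imp (Box (Imp (qpow q e) psi)) psi.
Proof.
  unfold Xlist; intro Ha.
  apply in_flat_map in Ha; destruct Ha as [s [Hs Ha]].
  destruct s; simpl in Ha; try contradiction.
  destruct Ha as [<- | [<- | []]]; [exists s, true | exists s, false]; auto.
Qed.

Lemma gderiv_sound (L Y : form -> Prop) (M : gframe) (V : nat -> gW M -> Prop) :
  Lframe L M -> admissible_val M V ->
  (forall a, Y a -> forall x, sat M V x a) ->
  forall a, gderiv L Y a -> forall x, sat M V x a.
Proof.
  intros HL HV HY a D; induction D; intro x.
  - apply HY; assumption.
  - apply HL; assumption.
  - apply IHD1, IHD2.
  - intros v _; apply IHD.
Qed.

Lemma gderiv_bigAnd (L Y : form -> Prop) (HL : normal L) :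
  forall l, (forall a, In a l -> gderiv L Y a) -> gderiv L Y (bigAnd l).
Proof.
  destruct HL as [Htaut _].
  induction l as [| a l IH]; intro Hl.
  - apply gd_thm, Htaut; intro v; reflexivity.
  - destruct l as [| b l'].
    + apply Hl; simpl; auto.
    + change (gderiv L Y (And a (bigAnd (b :: l')))).
      assert (Hintro : forall c, tautology (Imp a (Imp c (And a c)))).
      { intros c v; unfold And, Neg; simpl.
        destruct (beval v a), (beval v c); reflexivity. }
      apply gd_mp with (bigAnd (b :: l')); [apply gd_mp with a |].
      * apply gd_thm, Htaut, Hintro.
      * apply Hl; simpl; auto.
      * apply IH; intros; apply Hl; simpl; auto.
Qed.

Lemma gderiv_of_local (L : form -> Prop) (HL : normal L) (l : list form)
  (phi : form) (n : nat) :
  L (Imp (boxn n (bigAnd l)) phi) -> gderiv L (fun a => In a l) phi.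
Proof.
  intro Hn; apply gd_mp with (boxn n (bigAnd l)); [apply gd_thm, Hn |].
  clear Hn; induction n as [| n IH]; simpl.
  - apply (gderiv_bigAnd L _ HL); intros a Ha; apply gd_hyp, Ha.
  - apply gd_nec, IH.
Qed.

Lemma T_instance (L : form -> Prop) (HT : forall a, Tlogic a -> L a) (psi : form) :
  L (Imp (Box psi) psi).
Proof.
  apply HT, (Kp_subst _ (fun _ => psi) (Imp (Box (Var 0)) (Var 0))).
  apply Kp_ax; reflexivity.
Qed.

Section DoubledModel.

Variable F : gframe.
Variable V : nat -> gW F -> Prop.
Variable q : nat.

Definition qval : nat -> gW (two F) -> Prop :=
  fun n x => if PeanoNat.Nat.eq_dec n q then snd x = true else V n (fst x).

(** qval is admissible in 2F whenever V is admissible in the general frame F: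
    q is the set (empty x {0}) u (W x {1}). *)
Lemma qval_admissible : is_gframe F -> admissible_val F V -> admissible_val (two F) qval.
Proof.
  intros [Hempty [Hcompl _]] HV n; unfold qval; simpl.
  destruct (PeanoNat.Nat.eq_dec n q).
  - exists (fun _ => False), (fun _ => ~ False).
    split; [exact Hempty | split; [apply Hcompl, Hempty |]].
    intros w [|]; simpl; intuition discriminate.
  - exists (V n), (V n); repeat split; auto; destruct b; auto.
Qed.

Lemma sat_two_qfree :
  forall psi, ~ occurs q psi -> forall w b,
  sat (two F) qval (w, b) psi <-> sat F V w psi.
Proof.
  induction psi as [n | | psi1 IH1 psi2 IH2 | psi IH]; simpl; intros Ho w b.
  - unfold qval; simpl; destruct (PeanoNat.Nat.eq_dec n q); [congruence | tauto].
  - tauto.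
  - rewrite IH1, IH2 by tauto; tauto.
  - split.
    + intros H v Hv; apply (IH Ho v b), (H (v, b)), Hv.
    + intros H [v b'] Hv; apply IH; auto.
Qed.

Lemma sat_qpow (v : gW F) (e : bool) : sat (two F) qval (v, e) (qpow q e).
Proof.
  unfold qpow, qval; destruct e; simpl;
    destruct (PeanoNat.Nat.eq_dec q q); congruence.
Qed.

(** If reflexivity holds in 2F, then Box(q^e -> psi) -> psi is true everywhere
    for q-free psi: from (w,b) both (v,b') and (v,e) are successors, and psi
    cannot distinguish them. *)
Lemma sat_X_member (psi : form) (e : bool) :
  ~ occurs q psi -> valid (two F) (Imp (Box psi) psi) ->
  admissible_val (two F) qval ->
  forall x, sat (two F) qval x (Imp (Box (Imp (qpow q e) psi)) psi).
Proof.
  intros Hpsi Hrefl Hadm x HB; apply (Hrefl qval Hadm x).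
  intros [v b'] Hxv.
  apply (sat_two_qfree psi Hpsi v b'), (sat_two_qfree psi Hpsi v e).
  apply (HB (v, e)); [exact Hxv | apply sat_qpow].
Qed.

End DoubledModel.

Lemma not_global_consequence (L0 : form -> Prop) (C : gframe -> Prop)
  (HT : forall a, Tlogic a -> L0 a)
  (HCg : forall F, C F -> is_gframe F)
  (Hcomp : complete_wrt L0 C)
  (H2 : forall F, C F -> Lframe L0 (two F))
  (phi : form) (Hphi : ~ L0 phi) (q : nat) (Hq : ~ occurs q phi) :
  ~ gderiv L0 (fun a => In a (Xlist q phi)) phi.
Proof.
  intro D; destruct (Hcomp phi Hphi) as [F [HF Hfail]]; apply Hfail.
  intros V HV w.
  assert (Hadm := qval_admissible F V q (HCg F HF) HV).
  apply (sat_two_qfree F V q phi Hq w false).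
  apply (gderiv_sound L0 (fun a => In a (Xlist q phi)) (two F) _ (H2 F HF) Hadm);
    [| exact D].
  intros a Ha; destruct (Xlist_inv q phi a Ha) as [psi [e [Hin ->]]].
  apply sat_X_member; [| apply (H2 F HF), T_instance, HT | exact Hadm].
  intro Ho; apply Hq, (sub_occurs q phi (Box psi) Hin Ho).
Qed.

Theorem mainTheorem5 (L0 : form -> Prop) (C : gframe -> Prop)
  (HL0 : normal L0)
  (HT : forall a, Tlogic a -> L0 a)
  (HCg : forall F, C F -> is_gframe F)
  (Hcomp : complete_wrt L0 C)
  (H2 : forall F, C F -> Lframe L0 (two F))
  (phi : form) (Hphi : ~ L0 phi)
  (q : nat) (Hq : ~ occurs q phi) :
  ~ gderiv L0 (fun a => In a (Xlist q phi)) phi /\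
  (forall n : nat, ~ L0 (Imp (boxn n (bigAnd (Xlist q phi))) phi)).
Proof.
  assert (Hglobal := not_global_consequence L0 C HT HCg Hcomp H2 phi Hphi q Hq).
  split; [exact Hglobal |].
  intros n Hn; apply Hglobal, (gderiv_of_local L0 HL0 _ phi n Hn).
Qed.
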